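(* Let $F$ be a positive integer and $S$ a numerical semigroup. The following are equivalent: (1) $S\in\mathrm{Sat}(F)$ and $\mathrm{Sat}(F)\text{-}\mathrm{rank}(S)=1$; (2) there is $m\in\mathbb{N}$ with $2\le m<F$, $m\nmid F$, and $S=\mathrm{T}(m,F+1)$.
   Context: A numerical semigroup is a subset $S\subseteq\mathbb{N}$ closed under addition, containing $0$, with $\mathbb{N}\setminus S$ finite; its Frobenius number $\mathrm{F}(S)$ is the largest integer not in $S$. For $A\subseteq\mathbb{N}$ and $a\in A$, let $\mathrm{d}_A(a)=\gcd\{x\in A\mid x\le a\}$. A numerical semigroup $S$ is saturated if $s+\mathrm{d}_S(s)\in S$ for all $s\in S\setminus\{0\}$. For a positive integer $F$, $\mathrm{Sat}(F)$ denotes the set of all saturated numerical semigroups $S$ with $\mathrm{F}(S)=F$. For $a,b\in\mathbb{N}$, $\mathrm{T}(a,b)=\{ka\mid k\in\mathbb{N}\}\cup\{x\in\mathbb{N}\mid x\ge b\}$. Let $\Delta(F+1)=\{0\}\cup\{x\in\mathbb{N}\mid x\ge F+1\}$. A set $X\subseteq\mathbb{N}$ is a $\mathrm{Sat}(F)$-set if $X\cap\Delta(F+1)=\emptyset$ and there exists $S\in\mathrm{Sat}(F)$ with $X\subseteq S$. For a $\mathrm{Sat}(F)$-set $X$, $\mathrm{Sat}(F)[X]$ denotes the intersection of all elements of $\mathrm{Sat}(F)$ containing $X$ (the smallest element of $\mathrm{Sat}(F)$ containing $X$). If $S=\mathrm{Sat}(F)[X]$, $X$ is a $\mathrm{Sat}(F)$-system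 of generators of $S$; it is minimal if $S\neq\mathrm{Sat}(F)[Y]$ for every proper subset $Y\subsetneq X$. Every $S\in\mathrm{Sat}(F)$ has a unique minimal $\mathrm{Sat}(F)$-system of generators, and its cardinality is the $\mathrm{Sat}(F)$-rank of $S$, denoted $\mathrm{Sat}(F)\text{-}\mathrm{rank}(S)$. *)

From mathcomp Require Import all_boot.
Set Implicit Arguments. Unset Strict Implicit. Unset Printing Implicit Defensive.

Definition numerical_semigroup (S : pred nat) : Prop :=
  [/\ S 0, (forall x y, S x -> S y -> S (x + y))
    & exists N, forall x, N <= x -> S x].

Definition frobenius_is (S : pred nat) (F : nat) : Prop :=
  ~~ S F /\ (forall x, F < x -> S x).

Definition dA (A : pred nat) (a : nat) : nat :=
  \big[gcdn/0]_(0 <= x < a.+1 | A x) x.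

Definition saturated (S : pred nat) : Prop :=
  forall s, S s -> s != 0 -> S (s + dA S s).

Definition Sat (F : nat) (S : pred nat) : Prop :=
  [/\ numerical_semigroup S, saturated S & frobenius_is S F].

Definition Tset (a b : nat) : pred nat := fun x => (a %| x) || (b <= x).

Definition Delta (n : nat) : pred nat := fun x => (x == 0) || (n <= x).

(* Sat(F)-sets (finite, as they lie in {1,...,F-1}); represented as seq nat *)
Definition SatF_set (F : nat) (X : seq nat) : Prop :=
  (forall x, x \in X -> ~~ Delta F.+1 x) /\
  exists S, Sat F S /\ (forall x, x \in X -> S x).

Definition SatF_gen (F : nat) (X : seq nat) (S : pred nat) : Prop :=
  SatF_set F X /\
  forall x, S x <-> (forall T, Sat F T -> (forall y, y \in X -> T y) -> T x).

Definition SatF_minimal (F : nat) (X : seq nat) (S : pred nat) : Prop :=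
  SatF_gen F X S /\
  forall Y : seq nat, {subset Y <= X} -> ~ {subset X <= Y} -> ~ SatF_gen F Y S.

(* Sat(F)-rank(S) = n : the (unique) minimal Sat(F)-system of generators
   of S has cardinality n *)
Definition SatF_rank (F : nat) (S : pred nat) (n : nat) : Prop :=
  exists X : seq nat, [/\ uniq X, SatF_minimal F X S & size X = n].

From mathcomp Require Import all_boot.
From mathcomp Require Import zify.

(* For m not dividing F, the set T(m, F+1) of multiples of m
   together with all x > F is a saturated numerical semigroup with Frobenius
   number F, and it is contained in every numerical semigroup that contains m
   and every x > F.  Hence T(m, F+1) is exactly Sat(F)[{m}], and conversely a
   Sat(F)-set {m} forces m not to divide F (otherwise F would lie in every
   semigroup containing m).  Since Sat(F)[{}] is Delta(F+1), which misses
   every 0 < m <= F, the system {m} is always minimal.  The theorem follows: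
   rank one means S = Sat(F)[{m}] = T(m, F+1) for a Sat(F)-set {m}, and the
   numerical conditions 2 <= m < F, m not dividing F, are exactly what makes
   {m} a Sat(F)-set. *)

Lemma Sat_ext {F : nat} {S T : pred nat} : S =1 T -> Sat F S -> Sat F T.
Proof.
move=> eqS [[S0 Sadd [N SN]] Ssat [SF SFr]]; split.
- split; first by rewrite -eqS.
  + by move=> x y; rewrite -!eqS; apply: Sadd.
  + by exists N => x /SN; rewrite eqS.
- move=> s; rewrite -!eqS => Ss s0.
  have -> : dA T s = dA S s by apply: eq_bigl => i; rewrite eqS.
  exact: Ssat.
- by split=> [|x /SFr]; rewrite -eqS.
Qed.

Lemma dvdn_dA (A : pred nat) (a m : nat) :
  (forall x, x <= a -> A x -> m %| x) -> m %| dA A a.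
Proof.
move=> Adiv; rewrite /dA big_nat_cond.
apply: (big_ind (fun y => m %| y)) => // [y z my mz|x /andP[/andP[_ xa] Ax]].
- by rewrite dvdn_gcd my mz.
- exact: Adiv.
Qed.

Lemma Tset_numerical (m b : nat) : numerical_semigroup (Tset m b).
Proof.
split; first by rewrite /Tset dvdn0.
- move=> x y /orP[mx|bx] /orP[my|yb]; apply/orP; try (right; lia).
  by left; rewrite dvdn_add.
- by exists b => x bx; rewrite /Tset bx orbT.
Qed.

(* Below b, T(m, b) consists of multiples of m, so d_T(s) is one as well. *)
Lemma Tset_saturated (m b : nat) : saturated (Tset m b).
Proof.
move=> s /orP[ms|bs] _; apply/orP; last by right; lia.
have [bs|sb] := leqP b s; first by right; lia.
left; rewrite dvdn_add // dvdn_dA // => x xs /orP[//|bx]; lia.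
Qed.

Lemma Tset_Sat (F m : nat) : ~~ (m %| F) -> Sat F (Tset m F.+1).
Proof.
move=> mF; split; [exact: Tset_numerical | exact: Tset_saturated |].
split; first by rewrite /Tset negb_or mF ltnn.
by move=> x Fx; rewrite /Tset Fx orbT.
Qed.

(* Delta(F+1) lies in Sat(F), which bounds every Sat(F)[X] from above. *)
Lemma Delta_Sat (F : nat) : 0 < F -> Sat F (Delta F.+1).
Proof.
move=> F0; split.
- split=> //; last by exists F.+1 => x Fx; rewrite /Delta Fx orbT.
  by move=> x y /orP[|] ? /orP[|] ?; apply/orP; lia.
- by move=> s /orP[/eqP->//|Fs] _; apply/orP; right; lia.
- split; first by rewrite /Delta negb_or ltnn andbT -lt0n.
  by move=> x Fx; rewrite /Delta Fx orbT.
Qed.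

Lemma Tset_least {F m : nat} {T : pred nat} :
  numerical_semigroup T -> (forall x, F < x -> T x) -> T m ->
  forall x, Tset m F.+1 x -> T x.
Proof.
move=> [T0 Tadd _] TFr Tm x /orP[/dvdnP[k ->]|Fx]; last exact: TFr.
by elim: k => [|k IH]; rewrite ?mul0n // mulSn Tadd.
Qed.

Lemma SatF_set1 (F m : nat) :
  SatF_set F [:: m] <-> [/\ 0 < m, m <= F & ~~ (m %| F)].
Proof.
split=> [[notD [T [[Tns _ [TF TFr]] TX]]] | [m0 mF ndF]].
- have /andP[m0 mF] : 0 < m <= F.
    by move: (notD m (mem_head _ _)); rewrite /Delta negb_or -leqNgt -lt0n.
  split=> //; apply/negP => mdF; case/negP: TF.
  by apply: (Tset_least Tns TFr (TX m (mem_head _ _)) F); rewrite /Tset mdF.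
- split=> [y|]; first by rewrite inE => /eqP->; rewrite /Delta; lia.
  exists (Tset m F.+1); split=> [|y]; first exact: Tset_Sat.
  by rewrite inE => /eqP->; rewrite /Tset dvdnn.
Qed.

Lemma SatF_gen1 (F m : nat) (S : pred nat) :
  SatF_gen F [:: m] S <-> SatF_set F [:: m] /\ S =1 Tset m F.+1.
Proof.
have inT : forall T, (forall y, y \in [:: m] -> T y) <-> T m.
  by move=> T; split=> [/(_ m (mem_head _ _))//| Tm y]; rewrite inE => /eqP->.
have Tleast : forall x, Tset m F.+1 x ->
    forall T, Sat F T -> (forall y, y \in [:: m] -> T y) -> T x.
  by move=> x Tx T [Tns _ [_ TFr]] /inT Tm; apply: (Tset_least Tns TFr Tm).
split=> [[Xset genS] | [Xset eqS]]; split=> // x.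
- have [_ _ ndF] := proj1 (SatF_set1 F m) Xset.
  apply/idP/idP => [/genS|Tx]; last by apply/genS; apply: Tleast.
  by apply; [exact: Tset_Sat | apply/inT; rewrite /Tset dvdnn].
- rewrite eqS; split=> [|genx]; first exact: Tleast.
  have [_ _ ndF] := proj1 (SatF_set1 F m) Xset.
  by apply: genx; [exact: Tset_Sat | apply/inT; rewrite /Tset dvdnn].
Qed.

Lemma SatF_gen_nil {F : nat} {S : pred nat} :
  0 < F -> SatF_gen F [::] S -> forall x, S x -> Delta F.+1 x.
Proof. by move=> F0 [_ genS] x /genS; apply; [exact: Delta_Sat |]. Qed.

Lemma SatF_minimal1 (F m : nat) (S : pred nat) :
  0 < F -> SatF_gen F [:: m] S -> SatF_minimal F [:: m] S.
Proof.
move=> F0 genS; split=> // Y subY notsupY genY.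
have Y0 : Y = [::].
  case: Y subY notsupY {genY} => [//|y Y] /(_ y (mem_head _ _)).
  by rewrite inE => /eqP-> []z; rewrite inE => /eqP->; apply: mem_head.
have [Xset eqS] := proj1 (SatF_gen1 F m S) genS.
have Sm : S m by rewrite eqS /Tset dvdnn.
rewrite Y0 in genY; have [notD _] := Xset.
by have := notD m (mem_head _ _); rewrite (SatF_gen_nil F0 genY m Sm).
Qed.

Theorem corollary48 (F : nat) (S : pred nat) :
  0 < F -> numerical_semigroup S ->
  (Sat F S /\ SatF_rank F S 1) <->
  (exists m : nat, [/\ 2 <= m, m < F, ~~ (m %| F) & S =1 Tset m F.+1]).
Proof.
move=> F0 _; split.
- case=> _ [[|m [|? ?]] [_ [genS _] //] _].
  have [/SatF_set1 [m0 mF ndF] eqS] := proj1 (SatF_gen1 F m S) genS.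
  have m1 : m != 1 by apply: contraNneq ndF => ->; rewrite dvd1n.
  have mnF : m != F by apply: contraNneq ndF => ->; rewrite dvdnn.
  by exists m; split=> //; lia.
- case=> m [m2 mF ndF eqS]; split.
  + by apply: (Sat_ext (fun x => esym (eqS x))); exact: Tset_Sat.
  + exists [:: m]; split=> //; apply: SatF_minimal1 => //.
    by apply/SatF_gen1; split=> //; apply/SatF_set1; split=> //; lia.
Qed.
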